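(* Let $A\in\mathbb{R}^{m\times n}$, let $a=\max_{i,j}|A_{i,j}|$, and let $(U,V)$ be an iterative play system for $A$. Let $s,t\ge 0$ be integers and suppose that every row index and every column index is $E$-eligible in the interval $[s,s+t]$. Then $$\max V(s+t)-\min U(s+t)\le 4a(t+1).$$
   Context: An iterative play system $(U,V)$ for $A\in\mathbb{R}^{m\times n}$ is a pair of sequences $U(0),U(1),\dots\in\mathbb{R}^n$ and $V(0),V(1),\dots\in\mathbb{R}^m$ such that $\min U(0)=\max V(0)$ and, for each $t$, $U(t+1)=U(t)+A_{i(t),*}$ and $V(t+1)=V(t)+A_{*,j(t)}$ for some indices $i(t)\in\{1,\dots,m\}$, $j(t)\in\{1,\dots,n\}$, where $A_{i,*}$ is the $i$th row and $A_{*,j}$ the $j$th column of $A$. Write $u_j(t)$, $v_i(t)$ for the entries of $U(t)$, $V(t)$, and $\max$, $\min$ of a vector for its largest/smallest entry. With $a=\max_{i,j}|A_{i,j}|$, row $i$ is $E$-eligible in $[t,t']$ if there exists an integer $t_1\in[t,t']$ with $v_i(t_1)\ge\max V(t_1)-2a$; column $j$ is $E$-eligible in $[t,t']$ if there exists $t_1\in[t,t']$ with $u_j(t_1)\le\min U(t_1)+2a$. *)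

From mathcomp Require Import all_boot all_order all_algebra.
Set Implicit Arguments. Unset Strict Implicit. Unset Printing Implicit Defensive.
Import Order.TTheory GRing.Theory Num.Theory.
Local Open Scope ring_scope.

Definition vmax (R : realDomainType) (k : nat) (v : 'I_k.+1 -> R) : R :=
  \big[Num.max/v ord0]_(i < k.+1) v i.
Definition vmin (R : realDomainType) (k : nat) (v : 'I_k.+1 -> R) : R :=
  \big[Num.min/v ord0]_(i < k.+1) v i.

Definition amax (R : realDomainType) (m n : nat) (A : 'M[R]_(m.+1, n.+1)) : R :=
  \big[Num.max/0]_(i < m.+1) \big[Num.max/0]_(j < n.+1) `|A i j|.

Definition iterative_play_system (R : realDomainType) (m n : nat)
  (A : 'M[R]_(m.+1, n.+1)) (U : nat -> 'I_n.+1 -> R) (V : nat -> 'I_m.+1 -> R) : Prop :=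
  vmin (U 0%N) = vmax (V 0%N) /\
  forall t : nat,
    (exists i : 'I_m.+1, forall j, U t.+1 j = U t j + A i j) /\
    (exists j : 'I_n.+1, forall i, V t.+1 i = V t i + A i j).

Definition row_E_eligible (R : realDomainType) (m n : nat)
  (A : 'M[R]_(m.+1, n.+1)) (V : nat -> 'I_m.+1 -> R) (i : 'I_m.+1) (t t' : nat) : Prop :=
  exists t1 : nat, (t <= t1 <= t')%N /\ V t1 i >= vmax (V t1) - 2 * amax A.

Definition col_E_eligible (R : realDomainType) (m n : nat)
  (A : 'M[R]_(m.+1, n.+1)) (U : nat -> 'I_n.+1 -> R) (j : 'I_n.+1) (t t' : nat) : Prop :=
  exists t1 : nat, (t <= t1 <= t')%N /\ U t1 j <= vmin (U t1) + 2 * amax A.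

(* Let x and y count how often each row and each column has been played up
   to time T, so that U(T) = U(0) + x A and V(T) = V(0) + A y with x and y
   nonnegative of total mass T.  The bilinear term x A y then cancels in
   x.V(T) - U(T).y = x.V(0) - U(0).y <= T (max V(0) - min U(0)) = 0.
   Since entries move by at most a per step, E-eligibility in [s, s+t] puts
   every entry of V(T) within 2a(t+1) of max V(T) and every entry of U(T)
   within 2a(t+1) of min U(T), so x.V(T) - U(T).y >= T (max V(T) - min U(T)
   - 4a(t+1)). *)

From mathcomp Require Import all_boot all_order all_algebra.
From mathcomp Require Import lra zify.
Set Implicit Arguments. Unset Strict Implicit. Unset Printing Implicit Defensive.
Import Order.TTheory GRing.Theory Num.Theory.
Local Open Scope ring_scope.

Section VectorExtrema.
Variables (R : realDomainType) (k : nat).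
Implicit Types (v : 'I_k.+1 -> R) (c : R).

Lemma le_vmax v i : v i <= vmax v.
Proof. by rewrite /vmax (bigD1 i) //= le_max lexx. Qed.

Lemma vmin_le v i : vmin v <= v i.
Proof. by rewrite /vmin (bigD1 i) //= ge_min lexx. Qed.

Lemma vmax_le v c : (forall i, v i <= c) -> vmax v <= c.
Proof.
by move=> le_vc; apply: (big_ind (fun z => z <= c)) => // x y; rewrite ge_max => -> ->.
Qed.

Lemma vmin_ge v c : (forall i, c <= v i) -> c <= vmin v.
Proof.
by move=> le_cv; apply: (big_ind (fun z => c <= z)) => // x y; rewrite le_min => -> ->.
Qed.

End VectorExtrema.

Section EntryBound.
Variables (R : realDomainType) (m n : nat) (A : 'M[R]_(m.+1, n.+1)).

Lemma norm_le_amax i j : `|A i j| <= amax A.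
Proof.
rewrite /amax (bigD1 i) //= le_max; apply/orP; left.
by rewrite (bigD1 j) //= le_max lexx.
Qed.

Lemma amax_ge0 : 0 <= amax A.
Proof. exact: le_trans (normr_ge0 _) (norm_le_amax ord0 ord0). Qed.

End EntryBound.

Section BoundedDrift.
Variables (R : realDomainType) (p : nat) (W : nat -> 'I_p.+1 -> R) (a : R).
Hypothesis step_le : forall k i, `|W k.+1 i - W k i| <= a.

Lemma drift_le k d i : `|W (k + d)%N i - W k i| <= d%:R * a.
Proof.
elim: d => [|d IHd]; first by rewrite addn0 subrr normr0 mul0r.
rewrite addnS -natr1 mulrDl mul1r.
apply: le_trans (ler_distD (W (k + d)%N i) _ _) _; rewrite addrC; exact: lerD.
Qed.

Lemma vmax_drift_le k d : vmax (W (k + d)%N) <= vmax (W k) + d%:R * a.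
Proof.
apply: vmax_le => i; apply: le_trans (ler_distlDr (drift_le k d i)) _.
by rewrite lerD2r le_vmax.
Qed.

Lemma vmin_drift_ge k d : vmin (W k) - d%:R * a <= vmin (W (k + d)%N).
Proof.
apply: vmin_ge => i; apply: le_trans _ (ler_distlCBl (drift_le k d i)).
by rewrite lerD2r vmin_le.
Qed.

End BoundedDrift.

Section WeightedSums.
Variables (R : realDomainType) (k : nat) (x f : 'I_k -> R) (c : R).
Hypothesis x_ge0 : forall i, 0 <= x i.

Lemma weighted_sum_ge : (forall i, c <= f i) -> (\sum_i x i) * c <= \sum_i x i * f i.
Proof. by move=> le_cf; rewrite mulr_suml; apply: ler_sum => i _; rewrite ler_wpM2l. Qed.

Lemma weighted_sum_le : (forall i, f i <= c) -> \sum_i x i * f i <= (\sum_i x i) * c.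
Proof. by move=> le_fc; rewrite mulr_suml; apply: ler_sum => i _; rewrite ler_wpM2l. Qed.

End WeightedSums.

Section Delta.
Variables (R : pzSemiRingType) (k : nat) (i0 : 'I_k).

Lemma sum_delta_mul (f : 'I_k -> R) : \sum_i (i == i0)%:R * f i = f i0.
Proof.
rewrite (bigD1 i0) //= eqxx mul1r big1 ?addr0 // => i /negbTE ->.
by rewrite mul0r.
Qed.

Lemma sum_delta : \sum_i (i == i0)%:R = 1 :> R.
Proof. by rewrite (bigD1 i0) //= eqxx big1 ?addr0 // => i /negbTE ->. Qed.

End Delta.

Lemma payoff_gap_invariant (R : comPzRingType) (m n : nat) (A : 'M[R]_(m, n))
    (x : 'I_m -> R) (y : 'I_n -> R) (U U' : 'I_n -> R) (V V' : 'I_m -> R) :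
  (forall j, U' j = U j + \sum_i x i * A i j) ->
  (forall i, V' i = V i + \sum_j y j * A i j) ->
  \sum_i x i * V' i - \sum_j y j * U' j = \sum_i x i * V i - \sum_j y j * U j.
Proof.
move=> eU' eV'.
have cross : \sum_i x i * (\sum_j y j * A i j) = \sum_j y j * (\sum_i x i * A i j).
  under eq_bigr do rewrite mulr_sumr; rewrite exchange_big /=.
  by apply: eq_bigr => j _; rewrite mulr_sumr; apply: eq_bigr => i _; rewrite mulrCA.
have sumV' : \sum_i x i * V' i = \sum_i x i * V i + \sum_i x i * (\sum_j y j * A i j).
  by rewrite -big_split; apply: eq_bigr => i _; rewrite eV' mulrDr.
have sumU' : \sum_j y j * U' j = \sum_j y j * U j + \sum_j y j * (\sum_i x i * A i j).
  by rewrite -big_split; apply: eq_bigr => j _; rewrite eU' mulrDr.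
by rewrite sumV' sumU' cross opprD addrACA subrr addr0.
Qed.

Section PlaySystem.
Variables (R : realFieldType) (m n : nat) (A : 'M[R]_(m.+1, n.+1)).
Variables (U : nat -> 'I_n.+1 -> R) (V : nat -> 'I_m.+1 -> R).
Hypothesis play : iterative_play_system A U V.

Lemma play_stepU k j : `|U k.+1 j - U k j| <= amax A.
Proof. by have [_ /(_ k) [[i ->] _]] := play; rewrite addrC addKr norm_le_amax. Qed.

Lemma play_stepV k i : `|V k.+1 i - V k i| <= amax A.
Proof. by have [_ /(_ k) [_ [j ->]]] := play; rewrite addrC addKr norm_le_amax. Qed.

Lemma play_frequencies T : exists (x : 'I_m.+1 -> R) (y : 'I_n.+1 -> R),
  [/\ (forall i, 0 <= x i) /\ (forall j, 0 <= y j),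
      \sum_i x i = T%:R /\ \sum_j y j = T%:R,
      forall j, U T j = U 0%N j + \sum_i x i * A i j &
      forall i, V T i = V 0%N i + \sum_j y j * A i j].
Proof.
elim: T => [|T [x [y [[x_ge0 y_ge0] [sum_x sum_y] eUT eVT]]]].
  exists (fun=> 0), (fun=> 0); split; first by [].
  - by rewrite !big1.
  - by move=> j; rewrite big1 ?addr0 // => i _; rewrite mul0r.
  - by move=> i; rewrite big1 ?addr0 // => j _; rewrite mul0r.
have [_ /(_ T) [[i0 eU] [j0 eV]]] := play.
exists (fun i => x i + (i == i0)%:R), (fun j => y j + (j == j0)%:R); split.
- by split=> ? ; rewrite addr_ge0.
- by rewrite !big_split /= sum_x sum_y !sum_delta !natr1.
- move=> j; under eq_bigr do rewrite mulrDl.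
  by rewrite eU eUT big_split /= sum_delta_mul addrA.
- move=> i; under eq_bigr do rewrite mulrDl.
  by rewrite eV eVT big_split /= sum_delta_mul addrA.
Qed.

Lemma play_gap_le T c : 0 <= c ->
  (forall i, vmax (V T) - c <= V T i) -> (forall j, U T j <= vmin (U T) + c) ->
  vmax (V T) - vmin (U T) <= 2 * c.
Proof.
move=> c_ge0 nearV nearU; have [start _] := play.
have [x [y [[x_ge0 y_ge0] [sum_x sum_y] eUT eVT]]] := play_frequencies T.
have payoff := payoff_gap_invariant eUT eVT.
have lbV := weighted_sum_ge x_ge0 nearV.
have ubU := weighted_sum_le y_ge0 nearU.
have ubV0 := weighted_sum_le x_ge0 (le_vmax (V 0%N)).
have lbU0 := weighted_sum_ge y_ge0 (vmin_le (U 0%N)).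
rewrite sum_x in lbV ubV0; rewrite sum_y in ubU lbU0.
case: (posnP T) => [T0|T_gt0].
  by rewrite T0 -start subrr mulr_ge0.
have : T%:R * (vmax (V T) - vmin (U T) - 2 * c) <= 0 by rewrite start in lbU0; lra.
by rewrite pmulr_rle0 ?ltr0n // subr_le0.
Qed.

Lemma elapsed_drift_le s t t1 : (s <= t1 <= s + t)%N ->
  (s + t - t1)%:R * amax A <= t%:R * amax A.
Proof. by move=> /andP[? ?]; rewrite ler_wpM2r ?amax_ge0 // ler_nat; lia. Qed.

Lemma row_eligible_near_vmax s t i : row_E_eligible A V i s (s + t) ->
  vmax (V (s + t)%N) - 2 * amax A * t.+1%:R <= V (s + t)%N i.
Proof.
move=> [t1 [t1_in near_t1]]; have elapsed := elapsed_drift_le t1_in.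
have hi := vmax_drift_le play_stepV t1 (s + t - t1).
have lo := ler_distlCBl (drift_le play_stepV t1 (s + t - t1) i).
move/andP: t1_in => [_ t1_le]; rewrite subnKC // in hi lo.
rewrite -[t.+1%:R]natr1; lra.
Qed.

Lemma col_eligible_near_vmin s t j : col_E_eligible A U j s (s + t) ->
  U (s + t)%N j <= vmin (U (s + t)%N) + 2 * amax A * t.+1%:R.
Proof.
move=> [t1 [t1_in near_t1]]; have elapsed := elapsed_drift_le t1_in.
have lo := vmin_drift_ge play_stepU t1 (s + t - t1).
have hi := ler_distlDr (drift_le play_stepU t1 (s + t - t1) j).
move/andP: t1_in => [_ t1_le]; rewrite subnKC // in hi lo.
rewrite -[t.+1%:R]natr1; lra.
Qed.

End PlaySystem.

Theorem lemma3 (R : realFieldType) (m n : nat) (A : 'M[R]_(m.+1, n.+1))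
  (U : nat -> 'I_n.+1 -> R) (V : nat -> 'I_m.+1 -> R) (s t : nat) :
  iterative_play_system A U V ->
  (forall i : 'I_m.+1, row_E_eligible A V i s (s + t)) ->
  (forall j : 'I_n.+1, col_E_eligible A U j s (s + t)) ->
  vmax (V (s + t)%N) - vmin (U (s + t)%N) <= 4 * amax A * (t.+1)%:R.
Proof.
move=> play rows cols.
have c_ge0 : 0 <= 2 * amax A * t.+1%:R by rewrite !mulr_ge0 ?amax_ge0.
have := play_gap_le play c_ge0 (fun i => row_eligible_near_vmax play (rows i))
  (fun j => col_eligible_near_vmin play (cols j)).
by rewrite !mulrA -natrM.
Qed.
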